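(* There exists an infinite biosphere $(G,t)$ such that $\mathrm{REF}$ is not downward generic.
   Context: An infinite biosphere is a directed graph $G$ together with a function $t$ assigning a real number $t(v)$ to each vertex, such that: (1) if $v$ is a parent of $w$ (edge from $v$ to $w$) then $t(v)<t(w)$; (2) for every $r\in\mathbb R$ at most finitely many vertices $v$ have $t(v)<r$; (3) every vertex has finitely many children; (4) $G$ is infinite. $w$ is a descendant of $v$ if there is a directed path from $v$ to $w$ of length at least one. $\mathrm{REF}$ is the set of sets $S$ of vertices of $G$ such that every $v\in S$ having infinitely many descendants in $G$ has infinitely many descendants in $S$. For a nonempty linear order $(X,<)$, a descending chain of $G$-subsets indexed by $X$ is a family $\{C_\alpha\}_{\alpha\in X}$ with $C_\beta\subseteq C_\alpha$ whenever $\alpha<\beta$. A set $T$ of $G$-subsets is downward generic if for every descending chain $\{C_\alpha\}_{\alpha\in X}$ of nonempty $G$-subsets with each $C_\alpha\in T$, $\bigcap_\alpha C_\alpha\in T$. *)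

From Stdlib Require Import Reals List Relations.
Open Scope R_scope.

Definition finite_pred {V : Type} (P : V -> Prop) : Prop :=
  exists l : list V, forall x, P x -> In x l.

Definition infinite_pred {V : Type} (P : V -> Prop) : Prop := ~ finite_pred P.

(* A directed graph on vertex type V is given by its edge relation E:
   E v w means there is an edge from v to w (v is a parent of w). *)
Record biosphere (V : Type) (E : V -> V -> Prop) (t : V -> R) : Prop := {
  bio_edge : forall v w, E v w -> t v < t w;
  bio_below : forall r : R, finite_pred (fun v => t v < r);
  bio_children : forall v, finite_pred (fun w => E v w);
  bio_infinite : infinite_pred (fun _ : V => True)
}.

Definition descendant {V : Type} (E : V -> V -> Prop) (v w : V) : Prop :=
  clos_trans V E v w.

Definition REF {V : Type} (E : V -> V -> Prop) (S : V -> Prop) : Prop :=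
  forall v, S v ->
    infinite_pred (fun w => descendant E v w) ->
    infinite_pred (fun w => descendant E v w /\ S w).

Definition strict_linear_order {X : Type} (lt : X -> X -> Prop) : Prop :=
  (forall a, ~ lt a a) /\
  (forall a b c, lt a b -> lt b c -> lt a c) /\
  (forall a b, lt a b \/ a = b \/ lt b a).

Definition downward_generic {V : Type} (T : (V -> Prop) -> Prop) : Prop :=
  forall (X : Type) (lt : X -> X -> Prop) (C : X -> V -> Prop),
    inhabited X ->
    strict_linear_order lt ->
    (forall a b, lt a b -> forall v, C b v -> C a v) ->
    (forall a, exists v, C a v) ->
    (forall a, T (C a)) ->
    T (fun v => forall a, C a v).

(* The successor graph n -> n+1 on the naturals, with t = INR, is a biosphere
   in which every vertex has infinitely many descendants.  The sets
   C_k = {0} ∪ [k, ∞) form a descending chain of nonempty sets in REF (every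
   element other than 0 has a tail above it), but their intersection {0} is
   not in REF: 0 has infinitely many descendants in G and none in {0}. *)

From Stdlib Require Import Reals Lra Lia List Relations.

Lemma finite_pred_lt_bounded (n : nat) (P : nat -> Prop) :
  (forall v, P v -> (v < n)%nat) -> finite_pred P.
Proof.
  intros HP. exists (seq 0 n). intros v Pv. apply in_seq. specialize (HP v Pv). lia.
Qed.

Lemma infinite_pred_unbounded (P : nat -> Prop) :
  (forall N, exists n, (N <= n)%nat /\ P n) -> infinite_pred P.
Proof.
  intros Hunb [l Hl].
  destruct (Hunb (S (list_max l))) as [n [Hn Pn]].
  assert (Hmax : Forall (fun k => (k <= list_max l)%nat) l) by (apply list_max_le; lia).
  rewrite Forall_forall in Hmax. specialize (Hmax n (Hl n Pn)). lia.
Qed.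

Lemma REF_ext {V : Type} (E : V -> V -> Prop) (S S' : V -> Prop) :
  (forall v, S v <-> S' v) -> REF E S -> REF E S'.
Proof.
  intros HSS' HS v S'v Hinf [l Hl].
  apply (HS v (proj2 (HSS' v) S'v) Hinf). exists l.
  intros w [Hvw Sw]. apply Hl. split; [exact Hvw | apply HSS'; exact Sw].
Qed.

Definition succ_rel (n m : nat) : Prop := m = S n.

Lemma descendant_succ_rel (v w : nat) : descendant succ_rel v w <-> (v < w)%nat.
Proof.
  split.
  - induction 1 as [x y Hxy | x y z _ IHxy _ IHyz]; unfold succ_rel in *; lia.
  - induction w as [|w IH]; intros Hvw; [lia|].
    destruct (Nat.eq_dec v w) as [->|Hne].
    + apply t_step. reflexivity.
    + apply t_trans with w; [apply IH; lia | apply t_step; reflexivity].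
Qed.

Lemma succ_rel_biosphere : biosphere nat succ_rel INR.
Proof.
  constructor.
  - intros v w ->. apply lt_INR. lia.
  - intros r. destruct (INR_unbounded r) as [n Hn].
    apply (finite_pred_lt_bounded n). intros v Hv. apply INR_lt. lra.
  - intros v. exists (S v :: nil). intros w ->. left. reflexivity.
  - apply infinite_pred_unbounded. intros N. exists N. split; auto.
Qed.

Lemma succ_rel_descendants_infinite (v : nat) :
  infinite_pred (fun w => descendant succ_rel v w).
Proof.
  apply infinite_pred_unbounded. intros N. exists (S (N + v)).
  split; [lia | apply descendant_succ_rel; lia].
Qed.

Definition zero_or_tail (k v : nat) : Prop := v = 0%nat \/ (k <= v)%nat.

Lemma zero_or_tail_REF (k : nat) : REF succ_rel (zero_or_tail k).
Proof.
  intros v _ _. apply infinite_pred_unbounded. intros N.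
  exists (N + S v + k)%nat. split; [lia|].
  split; [apply descendant_succ_rel; lia | right; lia].
Qed.

Lemma zero_or_tail_meet (v : nat) : (forall k, zero_or_tail k v) <-> v = 0%nat.
Proof.
  split.
  - intros H. destruct (H (S v)) as [Hv | Hv]; [exact Hv | lia].
  - intros -> k. left. reflexivity.
Qed.

Lemma zero_singleton_not_REF : ~ REF succ_rel (fun v => v = 0%nat).
Proof.
  intros HREF. apply (HREF 0%nat eq_refl (succ_rel_descendants_infinite 0)).
  exists nil. intros w [Hdesc ->]. apply descendant_succ_rel in Hdesc. lia.
Qed.

Theorem mainTheorem8 :
  exists (V : Type) (E : V -> V -> Prop) (t : V -> R),
    biosphere V E t /\ ~ downward_generic (REF E).
Proof.
  exists nat, succ_rel, INR. split; [exact succ_rel_biosphere|].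
  intros Hgeneric. apply zero_singleton_not_REF.
  apply (REF_ext _ _ _ zero_or_tail_meet).
  apply (Hgeneric nat lt zero_or_tail).
  - exact (inhabits 0%nat).
  - repeat split; intros; lia.
  - intros a b Hab v [Hv | Hv]; [left | right; lia]; exact Hv.
  - intros k. exists 0%nat. left. reflexivity.
  - exact zero_or_tail_REF.
Qed.
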